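(* Let $N\ge0$ be an integer, let $\vec\beta$ be admissible, and let $\ell<0$. Then the numbers $p_0(\ell),\dots,p_N(\ell)$ defined in the context satisfy $0\le p_k(\ell)\le1$ for every $k$ and $\sum_{k=0}^Np_k(\ell)=1$. Consequently they define a probability distribution on $\{0,\dots,N\}$.
   Context: Let $N\ge0$ be an integer. A vector $\vec\beta=(\beta_0,\dots,\beta_N)$ is admissible if $\beta_0\ge\beta_1\ge\cdots\ge\beta_N>0$ and $\sum_i\beta_i=1$. For such a vector put $\mu_i=\beta_{i+1}/\sum_{j=0}^i\beta_j$ for $0\le i\le N-1$. For $\ell<0$ define: - if $N=0$, $p_0(\ell)=1$; - if $N\ge1$, $p_N(\ell)=\exp\!\big(-\frac{(1-\beta_N)\ell^2}{2\beta_N}\big)$; - for $1\le k\le N-1$, $$p_k(\ell)=\Big(\prod_{m=k}^{N-1}\frac1{\mu_m}\Big)\sum_{j=k-1}^{N-1}e^{-\ell^2/(2\mu_j)}\prod_{\substack{m=k-1\\ m\ne j}}^{N-1}\frac1{1/\mu_m-1/\mu_j};$$ - $p_0(\ell)=1-\sum_{k=1}^Np_k(\ell)$. *)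

From Stdlib Require Import Reals Lra Lia List.
Import ListNotations.
Open Scope R_scope.

(* Finite sum / product of f i over i = a, a+1, ..., b (empty if b < a). *)
Definition rsum (a b : nat) (f : nat -> R) : R :=
  fold_right Rplus 0 (map f (seq a (S b - a))).
Definition rprod (a b : nat) (f : nat -> R) : R :=
  fold_right Rmult 1 (map f (seq a (S b - a))).

(* beta : nat -> R, only beta 0 .. beta N are relevant. *)
Definition admissible (N : nat) (beta : nat -> R) : Prop :=
  (forall i : nat, (i < N)%nat -> beta (S i) <= beta i) /\
  0 < beta N /\
  rsum 0 N beta = 1.

Definition mu (beta : nat -> R) (i : nat) : R :=
  beta (S i) / rsum 0 i beta.

Definition p_pos (N : nat) (beta : nat -> R) (l : R) (k : nat) : R :=
  if (k =? N)%nat then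
    exp (- ((1 - beta N) * l ^ 2) / (2 * beta N))
  else
    rprod k (N - 1) (fun m => / mu beta m) *
    rsum (k - 1) (N - 1) (fun j =>
      exp (- l ^ 2 / (2 * mu beta j)) *
      rprod (k - 1) (N - 1) (fun m =>
        if (m =? j)%nat then 1
        else / (/ mu beta m - / mu beta j))).

Definition p (N : nat) (beta : nat -> R) (l : R) (k : nat) : R :=
  if (k =? 0)%nat then
    (match N with
     | O => 1
     | _ => 1 - rsum 1 N (p_pos N beta l)
     end)
  else p_pos N beta l k.

(* Write [lambda_m = 1 / mu_m]. Since [beta] is nonincreasing, [0 < lambda_0 < ... < lambda_(N-1)].
   For [k >= 1], [p_k(l)] is [(prod_(m >= k) lambda_m) * h_(k-1..N-1)(l^2/2)], where
   [h_L(x) = sum_(j in L) exp(-lambda_j x) prod_(m in L, m <> j) 1/(lambda_m - lambda_j)]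
   is the density of a sum of independent exponential variables of rates [lambda_L],
   divided by the product of the rates. By partial fractions [h_L(0)] is 1 for a singleton
   and 0 otherwise, and [h_(a::A)' = - lambda_a h_(a::A) + h_A]; hence
   [exp(lambda_a x) h_(a::A)(x)] is nondecreasing and [h >= 0] on [x >= 0]. The sum
   [p_1 + ... + p_N] telescopes into a function of [x = l^2/2] equal to 1 at [x = 0] whose
   derivative is [- (prod_m lambda_m) h_(0..N-1)(x) <= 0], so it lies in [0, 1]. *)

From Stdlib Require Import Reals List Lra Lia.
From Coquelicot Require Import Coquelicot.
Import ListNotations.
Open Scope R_scope.

Definition lsum (f : nat -> R) (L : list nat) : R := fold_right Rplus 0 (map f L).
Definition lprod (f : nat -> R) (L : list nat) : R := fold_right Rmult 1 (map f L).

Lemma lsum_cons f a L : lsum f (a :: L) = f a + lsum f L.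
Proof. reflexivity. Qed.

Lemma lprod_cons f a L : lprod f (a :: L) = f a * lprod f L.
Proof. reflexivity. Qed.

Lemma lsum_ext_in f g L : (forall j, In j L -> f j = g j) -> lsum f L = lsum g L.
Proof. intros H; unfold lsum; f_equal; apply map_ext_in; exact H. Qed.

Lemma lsum_plus f g L : lsum (fun j => f j + g j) L = lsum f L + lsum g L.
Proof. induction L as [|a L IH]; [cbn; ring|]. rewrite !lsum_cons, IH; ring. Qed.

Lemma lsum_scal c f L : lsum (fun j => c * f j) L = c * lsum f L.
Proof. induction L as [|a L IH]; [cbn; ring|]. rewrite !lsum_cons, IH; ring. Qed.

Lemma lsum_nonneg f L : (forall j, In j L -> 0 <= f j) -> 0 <= lsum f L.
Proof.
  induction L as [|a L IH]; intros H; [cbn; lra|].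
  rewrite lsum_cons.
  assert (0 <= f a) by (apply H; left; reflexivity).
  assert (0 <= lsum f L) by (apply IH; intros j Hj; apply H; right; exact Hj).
  lra.
Qed.

Lemma lsum_elem_le f L k :
  (forall j, In j L -> 0 <= f j) -> In k L -> f k <= lsum f L.
Proof.
  induction L as [|a L IH]; intros H Hk; [destruct Hk|].
  rewrite lsum_cons. destruct Hk as [<-|Hk].
  - assert (0 <= lsum f L) by (apply lsum_nonneg; intros j Hj; apply H; right; exact Hj).
    lra.
  - assert (0 <= f a) by (apply H; left; reflexivity).
    assert (f k <= lsum f L) by (apply IH; [intros j Hj; apply H; right|]; assumption).
    lra.
Qed.

Lemma lprod_nonneg f L : (forall m, In m L -> 0 <= f m) -> 0 <= lprod f L.
Proof.
  induction L as [|a L IH]; intros H; cbn; [lra|].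
  apply Rmult_le_pos; [apply H; left; reflexivity|].
  apply IH; intros m Hm; apply H; right; exact Hm.
Qed.

Lemma nondecreasing_of_derive_nonneg (f f' : R -> R) :
  (forall x, is_derive f x (f' x)) -> (forall x, 0 <= x -> 0 <= f' x) ->
  forall x, 0 <= x -> f 0 <= f x.
Proof.
  intros Hd Hpos x Hx. destruct (Req_dec x 0) as [->|Hx0]; [lra|].
  destruct (MVT_cor2 f f' 0 x) as [c [Hc Hcx]]; [lra| |].
  - intros c _; apply is_derive_Reals, Hd.
  - assert (0 <= f' c) by (apply Hpos; lra). nra.
Qed.

Section Hypoexponential.
Variable lam : nat -> R.

Definition weight (j : nat) (L : list nat) : R :=
  lprod (fun m => if (m =? j)%nat then 1 else / (lam m - lam j)) L.

Definition hypo (L : list nat) (x : R) : R :=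
  lsum (fun j => exp (- (x * lam j)) * weight j L) L.

Lemma NoDup_map_head_neq a A j : NoDup (map lam (a :: A)) -> In j A -> lam a <> lam j.
Proof.
  intros Hnd Hj E. apply NoDup_cons_iff in Hnd as [Hnot _].
  apply Hnot. rewrite E. apply in_map, Hj.
Qed.

Lemma NoDup_map_drop_second a b A :
  NoDup (map lam (a :: b :: A)) -> NoDup (map lam (a :: A)).
Proof.
  intros Hnd. apply NoDup_cons_iff in Hnd as [Ha Hnd']. apply NoDup_cons_iff; split.
  - intro H; apply Ha; right; exact H.
  - inversion Hnd'; assumption.
Qed.

Lemma weight_cons_self a L : weight a (a :: L) = weight a L.
Proof. unfold weight; rewrite lprod_cons, Nat.eqb_refl; ring. Qed.

Lemma weight_cons a j L : lam a <> lam j -> weight j (a :: L) = / (lam a - lam j) * weight j L.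
Proof.
  intros Hne. unfold weight; rewrite lprod_cons.
  destruct (Nat.eqb_spec a j) as [->|_]; [contradiction|reflexivity].
Qed.

Lemma hypo_nil x : hypo [] x = 0.
Proof. reflexivity. Qed.

Lemma hypo_singleton a x : hypo [a] x = exp (- (x * lam a)).
Proof. unfold hypo; rewrite lsum_cons, weight_cons_self; cbn; ring. Qed.

Lemma hypo_singleton_0 a : hypo [a] 0 = 1.
Proof. rewrite hypo_singleton, Rmult_0_l, Ropp_0; apply exp_0. Qed.

Lemma hypo_cons_cons a b A x : NoDup (map lam (a :: b :: A)) ->
  (lam b - lam a) * hypo (a :: b :: A) x = hypo (a :: A) x - hypo (b :: A) x.
Proof.
  intros Hnd.
  assert (Hab : lam a <> lam b) by (apply (NoDup_map_head_neq a (b :: A)); [|left]; auto).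
  assert (Hndb : NoDup (map lam (b :: A))) by (inversion Hnd; assumption).
  assert (Hnda : NoDup (map lam (a :: A))) by (eapply NoDup_map_drop_second; eauto).
  set (u j := exp (- (x * lam j)) * weight j A).
  assert (Eab : lsum (fun j => exp (- (x * lam j)) * weight j (a :: b :: A)) A =
                lsum (fun j => / (lam a - lam j) * / (lam b - lam j) * u j) A).
  { apply lsum_ext_in; intros j Hj; unfold u.
    rewrite (weight_cons a), (weight_cons b);
      [ring | eapply NoDup_map_head_neq; eauto ..]. }
  assert (Ea : lsum (fun j => exp (- (x * lam j)) * weight j (a :: A)) A =
               lsum (fun j => (lam b - lam a) * (/ (lam a - lam j) * / (lam b - lam j) * u j)
                              + / (lam b - lam j) * u j) A).
  { apply lsum_ext_in; intros j Hj; unfold u.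
    pose proof (NoDup_map_head_neq a A j Hnda Hj).
    pose proof (NoDup_map_head_neq b A j Hndb Hj).
    rewrite weight_cons by assumption. field; lra. }
  assert (Eb : lsum (fun j => exp (- (x * lam j)) * weight j (b :: A)) A =
               lsum (fun j => / (lam b - lam j) * u j) A).
  { apply lsum_ext_in; intros j Hj; unfold u.
    rewrite weight_cons by (eapply NoDup_map_head_neq; eauto). ring. }
  unfold hypo. rewrite !lsum_cons, Eab, Ea, Eb, lsum_plus, lsum_scal.
  rewrite weight_cons_self, (weight_cons a b), (weight_cons b a), !weight_cons_self by lra.
  field. lra.
Qed.

Lemma hypo_cons_cons_0 A : forall a b, NoDup (map lam (a :: b :: A)) ->
  hypo (a :: b :: A) 0 = 0.
Proof.
  induction A as [|c A IH]; intros a b Hnd;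
    assert (Hab : lam a <> lam b) by (eapply NoDup_map_head_neq; [exact Hnd | left; reflexivity]);
    pose proof (hypo_cons_cons a b _ 0 Hnd) as E.
  - rewrite !hypo_singleton_0 in E.
    apply Rmult_eq_reg_l with (lam b - lam a); lra.
  - rewrite (IH a c), (IH b c) in E.
    + apply Rmult_eq_reg_l with (lam b - lam a); lra.
    + inversion Hnd; assumption.
    + eapply NoDup_map_drop_second; eauto.
Qed.

Lemma hypo_0_nonneg L : NoDup (map lam L) -> 0 <= hypo L 0.
Proof.
  intros Hnd. destruct L as [|a [|b A]].
  - rewrite hypo_nil; lra.
  - rewrite hypo_singleton_0; lra.
  - rewrite hypo_cons_cons_0; [lra | exact Hnd].
Qed.

Lemma is_derive_exp_combination (c : nat -> R) M x :
  is_derive (fun y => lsum (fun j => exp (- (y * lam j)) * c j) M) x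
            (lsum (fun j => - lam j * exp (- (x * lam j)) * c j) M).
Proof.
  induction M as [|a M IH].
  - exact (is_derive_const 0 x).
  - apply (is_derive_plus (fun y => exp (- (y * lam a)) * c a)); [|exact IH].
    auto_derive; [exact I | ring].
Qed.

Lemma is_derive_hypo_cons a A x : NoDup (map lam (a :: A)) ->
  is_derive (hypo (a :: A)) x (- lam a * hypo (a :: A) x + hypo A x).
Proof.
  intros Hnd.
  replace (- lam a * hypo (a :: A) x + hypo A x) with
    (lsum (fun j => - lam j * exp (- (x * lam j)) * weight j (a :: A)) (a :: A));
    [apply (is_derive_exp_combination (fun j => weight j (a :: A)))|].
  unfold hypo. rewrite !lsum_cons, weight_cons_self.
  rewrite (lsum_ext_in _ (fun j => - lam a * (exp (- (x * lam j)) * weight j (a :: A))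
                                   + exp (- (x * lam j)) * weight j A)).
  - rewrite lsum_plus, lsum_scal; ring.
  - intros j Hj. pose proof (NoDup_map_head_neq a A j Hnd Hj).
    rewrite weight_cons by assumption. field; lra.
Qed.

Lemma hypo_nonneg L : NoDup (map lam L) -> forall x, 0 <= x -> 0 <= hypo L x.
Proof.
  induction L as [|a A IH]; intros Hnd x Hx; [rewrite hypo_nil; lra|].
  assert (HndA : NoDup (map lam A)) by (inversion Hnd; assumption).
  pose (g y := exp (y * lam a) * hypo (a :: A) y).
  assert (Hg : forall y, is_derive g y (exp (y * lam a) * hypo A y)).
  { intro y.
    replace (exp (y * lam a) * hypo A y) with
      (lam a * exp (y * lam a) * hypo (a :: A) y
       + exp (y * lam a) * (- lam a * hypo (a :: A) y + hypo A y)) by ring.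
    apply (is_derive_mult (fun y => exp (y * lam a)) (hypo (a :: A)));
      [auto_derive; [exact I | ring] | apply is_derive_hypo_cons, Hnd | exact Rmult_comm]. }
  assert (Hmono := nondecreasing_of_derive_nonneg g _ Hg).
  assert (Hg0 : g 0 <= g x).
  { apply Hmono; [|exact Hx]. intros y Hy.
    apply Rmult_le_pos; [left; apply exp_pos | apply IH; assumption]. }
  unfold g in Hg0. rewrite Rmult_0_l, exp_0, Rmult_1_l in Hg0.
  pose proof (hypo_0_nonneg _ Hnd). pose proof (exp_pos (x * lam a)).
  destruct (Rlt_or_le (hypo (a :: A) x) 0); [nra | assumption].
Qed.

(* With [lam = rate beta] and [L = seq 0 N], the summands are [p_1(l), ..., p_N(l)] at
   [x = l^2/2] (see [p_pos_eq_hypo] below). *)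
Fixpoint suffix_sum (L : list nat) (x : R) : R :=
  match L with
  | [] => 0
  | a :: A => lprod lam A * hypo (a :: A) x + suffix_sum A x
  end.

Lemma is_derive_suffix_sum L x : NoDup (map lam L) ->
  is_derive (suffix_sum L) x (- (lprod lam L * hypo L x)).
Proof.
  induction L as [|a A IH]; intros Hnd.
  - rewrite hypo_nil, Rmult_0_r, Ropp_0. exact (is_derive_const 0 x).
  - assert (HndA : NoDup (map lam A)) by (inversion Hnd; assumption).
    replace (- (lprod lam (a :: A) * hypo (a :: A) x)) with
      (lprod lam A * (- lam a * hypo (a :: A) x + hypo A x) + - (lprod lam A * hypo A x))
      by (rewrite lprod_cons; ring).
    apply (is_derive_plus (fun y => lprod lam A * hypo (a :: A) y) (suffix_sum A));
      [apply is_derive_scal, is_derive_hypo_cons, Hnd | apply IH, HndA].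
Qed.

Lemma suffix_sum_0 L : NoDup (map lam L) -> L <> [] -> suffix_sum L 0 = 1.
Proof.
  induction L as [|a [|b A] IH]; intros Hnd Hne; [congruence| |].
  - cbn [suffix_sum]. rewrite hypo_singleton_0. cbn; ring.
  - cbn [suffix_sum] in *. rewrite hypo_cons_cons_0 by exact Hnd.
    rewrite IH; [ring | inversion Hnd; assumption | congruence].
Qed.

Lemma suffix_sum_nonneg L x : NoDup (map lam L) -> (forall m, In m L -> 0 < lam m) ->
  0 <= x -> 0 <= suffix_sum L x.
Proof.
  induction L as [|a A IH]; intros Hnd Hpos Hx; cbn [suffix_sum]; [lra|].
  assert (HndA : NoDup (map lam A)) by (inversion Hnd; assumption).
  apply Rplus_le_le_0_compat; [apply Rmult_le_pos|].
  - apply lprod_nonneg; intros m Hm; left; apply Hpos; right; exact Hm.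
  - apply hypo_nonneg; assumption.
  - apply IH; [exact HndA | intros m Hm; apply Hpos; right; exact Hm | exact Hx].
Qed.

Lemma suffix_sum_le_1 L x : NoDup (map lam L) -> (forall m, In m L -> 0 < lam m) ->
  0 <= x -> suffix_sum L x <= 1.
Proof.
  intros Hnd Hpos Hx. destruct L as [|a A]; [cbn; lra|].
  rewrite <- (suffix_sum_0 (a :: A)) by (assumption || congruence).
  enough (- suffix_sum (a :: A) 0 <= - suffix_sum (a :: A) x) by lra.
  apply (nondecreasing_of_derive_nonneg (fun y => - suffix_sum (a :: A) y)
           (fun y => lprod lam (a :: A) * hypo (a :: A) y));
    [|intros y Hy; apply Rmult_le_pos | exact Hx].
  - intro y. rewrite <- (Ropp_involutive (_ * _)).
    exact (is_derive_opp _ _ _ (is_derive_suffix_sum (a :: A) y Hnd)).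
  - apply lprod_nonneg; intros m Hm; left; apply Hpos, Hm.
  - apply hypo_nonneg; assumption.
Qed.

Lemma suffix_sum_seq x m : forall a, suffix_sum (seq a m) x =
  lsum (fun k => lprod lam (seq (S k) (a + m - S k)) * hypo (seq k (a + m - k)) x) (seq a m).
Proof.
  induction m as [|m IH]; intros a; [reflexivity|].
  cbn [seq suffix_sum]. rewrite lsum_cons, IH.
  replace (S a + m)%nat with (a + S m)%nat by lia.
  replace (a + S m - S a)%nat with m by lia.
  replace (a + S m - a)%nat with (S m) by lia.
  reflexivity.
Qed.

End Hypoexponential.

Lemma rsum_0_S m f : rsum 0 (S m) f = rsum 0 m f + f (S m).
Proof.
  unfold rsum. rewrite !Nat.sub_0_r, (seq_S (S m)), map_app, fold_right_app.
  cbn [map fold_right Nat.add]. rewrite Rplus_0_r.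
  generalize (map f (seq 0 (S m))). intros L.
  induction L as [|a L IH]; cbn [fold_right]; [ring|]. rewrite IH; ring.
Qed.

Section Admissible.
Variables (N : nat) (beta : nat -> R).
Hypothesis Hadm : admissible N beta.

Lemma beta_antitone i j : (i <= j <= N)%nat -> beta j <= beta i.
Proof.
  intros [Hij HjN]. induction Hij as [|j Hij IH]; [lra|].
  pose proof (proj1 Hadm j ltac:(lia)). specialize (IH ltac:(lia)). lra.
Qed.

Lemma beta_pos i : (i <= N)%nat -> 0 < beta i.
Proof.
  intros Hi. pose proof (beta_antitone i N ltac:(lia)).
  pose proof (proj1 (proj2 Hadm)). lra.
Qed.

Lemma rsum_beta_pos m : (m <= N)%nat -> 0 < rsum 0 m beta.
Proof.
  induction m as [|m IH]; intros Hm.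
  - cbn. pose proof (beta_pos 0 Hm). lra.
  - rewrite rsum_0_S. pose proof (beta_pos (S m) Hm). pose proof (IH ltac:(lia)). lra.
Qed.

Definition rate (m : nat) : R := / mu beta m.

Lemma rate_eq m : rate m = rsum 0 m beta / beta (S m).
Proof. apply Rinv_div. Qed.

Lemma rate_pos m : (m < N)%nat -> 0 < rate m.
Proof.
  intros Hm. rewrite rate_eq.
  apply Rdiv_lt_0_compat; [apply rsum_beta_pos | apply beta_pos]; lia.
Qed.

Lemma rate_lt_succ m : (S m < N)%nat -> rate m < rate (S m).
Proof.
  intros Hm. rewrite !rate_eq, rsum_0_S.
  pose proof (rsum_beta_pos m ltac:(lia)).
  pose proof (beta_pos (S m) ltac:(lia)). pose proof (beta_pos (S (S m)) ltac:(lia)).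
  pose proof (beta_antitone (S m) (S (S m)) ltac:(lia)).
  apply Rlt_le_trans with ((rsum 0 m beta + beta (S m)) / beta (S m)); unfold Rdiv.
  - apply Rmult_lt_compat_r; [apply Rinv_0_lt_compat|]; lra.
  - apply Rmult_le_compat_l; [|apply Rinv_le_contravar]; lra.
Qed.

Lemma rate_increasing m m' : (m < m' < N)%nat -> rate m < rate m'.
Proof.
  intros [Hmm' Hm'N]. induction Hmm' as [|m' Hmm' IH]; [apply rate_lt_succ; lia|].
  apply Rlt_trans with (rate m'); [apply IH | apply rate_lt_succ]; lia.
Qed.

Lemma NoDup_map_rate_seq a n : (a + n <= N)%nat -> NoDup (map rate (seq a n)).
Proof.
  intros Han. apply NoDup_map_NoDup_ForallPairs; [|apply seq_NoDup].
  intros i j Hi Hj E. apply in_seq in Hi, Hj.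
  destruct (Nat.lt_total i j) as [Hij|[Hij|Hij]]; [|exact Hij|].
  - pose proof (rate_increasing i j ltac:(lia)). lra.
  - pose proof (rate_increasing j i ltac:(lia)). lra.
Qed.

Lemma rate_pos_seq a n : (a + n <= N)%nat -> forall m, In m (seq a n) -> 0 < rate m.
Proof. intros Han m Hm. apply in_seq in Hm. apply rate_pos. lia. Qed.

Lemma p_pos_eq_hypo l k : (1 <= k <= N)%nat ->
  p_pos N beta l k =
  lprod rate (seq k (N - k)) * hypo rate (seq (k - 1) (N - (k - 1))) (l ^ 2 / 2).
Proof.
  intros Hk. unfold p_pos. destruct (Nat.eqb_spec k N) as [->|Hne].
  - replace (N - (N - 1))%nat with 1%nat by lia.
    rewrite Nat.sub_diag. cbn [seq]. rewrite hypo_singleton.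
    assert (Hrate : rate (N - 1) = (1 - beta N) / beta N).
    { rewrite rate_eq. replace (S (N - 1)) with N by lia. f_equal.
      pose proof (rsum_0_S (N - 1) beta) as E. replace (S (N - 1)) with N in E by lia.
      pose proof (proj2 (proj2 Hadm)). lra. }
    rewrite Hrate. cbn [lprod map fold_right]. rewrite Rmult_1_l. f_equal.
    pose proof (beta_pos N ltac:(lia)). field. lra.
  - unfold rprod, rsum.
    replace (S (N - 1) - k)%nat with (N - k)%nat by lia.
    replace (S (N - 1) - (k - 1))%nat with (N - (k - 1))%nat by lia.
    unfold lprod, hypo, lsum, weight, rate. f_equal. f_equal. apply map_ext. intros j.
    f_equal. f_equal. unfold Rdiv. rewrite Rinv_mult. ring.
Qed.

Lemma sum_p_pos_eq_suffix_sum l :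
  rsum 1 N (p_pos N beta l) = suffix_sum rate (seq 0 N) (l ^ 2 / 2).
Proof.
  rewrite suffix_sum_seq. unfold rsum. replace (S N - 1)%nat with N by lia.
  rewrite <- seq_shift, map_map. unfold lsum. f_equal. apply map_ext_in.
  intros k Hk. apply in_seq in Hk. rewrite p_pos_eq_hypo by lia.
  replace (S k - 1)%nat with k by lia. reflexivity.
Qed.

Lemma p_pos_nonneg l k : (1 <= k <= N)%nat -> 0 <= p_pos N beta l k.
Proof.
  intros Hk. rewrite p_pos_eq_hypo by exact Hk. apply Rmult_le_pos.
  - apply lprod_nonneg. intros m Hm. left. apply (rate_pos_seq k (N - k)); [lia | exact Hm].
  - apply hypo_nonneg; [apply NoDup_map_rate_seq; lia | nra].
Qed.

Lemma sum_p_pos_bounds l : 0 <= rsum 1 N (p_pos N beta l) <= 1.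
Proof.
  rewrite sum_p_pos_eq_suffix_sum.
  assert (Hnd := NoDup_map_rate_seq 0 N ltac:(lia)).
  assert (Hpos := rate_pos_seq 0 N ltac:(lia)).
  split; [apply suffix_sum_nonneg | apply suffix_sum_le_1]; solve [assumption | nra].
Qed.

End Admissible.

Lemma rsum_p_split N beta l :
  rsum 0 N (p N beta l) = p N beta l 0 + rsum 1 N (p_pos N beta l).
Proof.
  unfold rsum. rewrite Nat.sub_0_r. replace (S N - 1)%nat with N by lia.
  cbn [seq map fold_right]. f_equal. f_equal. apply map_ext_in.
  intros k Hk. apply in_seq in Hk. unfold p.
  destruct (Nat.eqb_spec k 0); [lia | reflexivity].
Qed.

Theorem mainTheorem2 (N : nat) (beta : nat -> R) (l : R)
  (Hadm : admissible N beta) (Hl : l < 0) :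
  (forall k : nat, (k <= N)%nat -> 0 <= p N beta l k <= 1) /\
  rsum 0 N (fun k => p N beta l k) = 1.
Proof.
  destruct N as [|n].
  { split; [intros k Hk; replace k with 0%nat by lia; cbn; lra | cbn; ring]. }
  set (tail := rsum 1 (S n) (p_pos (S n) beta l)).
  assert (Hp0 : p (S n) beta l 0 = 1 - tail) by reflexivity.
  assert (Htail : 0 <= tail <= 1) by exact (sum_p_pos_bounds (S n) beta Hadm l).
  assert (Hpk := p_pos_nonneg (S n) beta Hadm l).
  split.
  - intros [|k] Hk; [rewrite Hp0; lra|].
    split; [apply Hpk; lia|].
    enough (p_pos (S n) beta l (S k) <= tail) by (cbn [p Nat.eqb]; lra).
    apply lsum_elem_le; [intros j Hj; apply in_seq in Hj; apply Hpk; lia | apply in_seq; lia].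
  - rewrite rsum_p_split, Hp0. fold tail. ring.
Qed.
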